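(* Fix $\sigma\in\mathcal A$ and a probability vector $\mathbf p$ with strictly positive entries. There exists a constant $C>1$ depending only on the sponge $F$ such that for all $\mathbf i\in\Sigma$, $0<R\le1$ and $r<\lambda_{\min}R$ for which $\mathbf i$ determines a $\sigma$-ordered cube both at scale $R$ and at scale $r$, \[ C^{-1}\Big(\frac Rr\Big)^{\underline S(\mathbf p,\sigma)}\le\frac{\mu_{\mathbf p}(B_{\mathbf i}(R))}{\mu_{\mathbf p}(B_{\mathbf i}(r))}\le C\Big(\frac Rr\Big)^{\overline S(\mathbf p,\sigma)}. \]
   Context: Setting: $\mathcal I=\{1,\dots,N\}$, $f_i(x)=A_ix+t_i$ on $\mathbb R^d$ with $A_i=\mathrm{diag}(\lambda_i^{(1)},\dots,\lambda_i^{(d)})$, all $\lambda_i^{(n)}\in(0,1)$, $f_i([0,1]^d)\subset[0,1]^d$, no two maps agree on $[0,1]^d$, and for all $m\ne n$ some $i$ has $\lambda_i^{(n)}\ne\lambda_i^{(m)}$; $F$ is the attractor. $\lambda_{\min}=\min_{i,n}\lambda_i^{(n)}$. $\Sigma=\mathcal I^{\mathbb N}$, $\mu_{\mathbf p}=\mathbf p^{\mathbb N}$. For $\mathbf i\in\Sigma$, $r>0$, $L_{\mathbf i}(r,n)$ is the unique integer with $\prod_{\ell=1}^{L_{\mathbf i}(r,n)}\lambda_{i_\ell}^{(n)}\le r<\prod_{\ell=1}^{L_{\mathbf i}(r,n)-1}\lambda_{i_\ell}^{(n)}$. $\mathbf i$ determines a $\sigma$-ordered cube at scale $r$ if $L_{\mathbf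 i}(r,\sigma_d)\le\dots\le L_{\mathbf i}(r,\sigma_1)$, ties resolved by: if coordinates $k<m$ have $L_{\mathbf i}(r,k)=L_{\mathbf i}(r,m)$ then $k$ precedes $m$ iff $\prod_{\ell=1}^{L_{\mathbf i}(r,k)}\lambda_{i_\ell}^{(k)}\ge\prod_{\ell=1}^{L_{\mathbf i}(r,k)}\lambda_{i_\ell}^{(m)}$. $\mathcal A$ is the set of $\sigma$ realised in this way by some $\mathbf i,r$. $E_n^\sigma$: span of coordinate axes $\sigma_1,\dots,\sigma_n$; $f_i,f_j$ overlap exactly on $E_n^\sigma$ if their orthogonal projections onto $E_n^\sigma$ agree on $[0,1]^d$. For $1\le n\le d-1$, $\mathcal I_n^\sigma$ is the set of $j$ such that no $i<j$ overlaps exactly with $j$ on $E_n^\sigma$; $\mathcal I_d^\sigma=\mathcal I$; $\Pi_n^\sigma j$ is the unique element of $\mathcal I_n^\sigma$ overlapping exactly with $j$ on $E_n^\sigma$ ($\Pi_d^\sigma=\mathrm{id}$, $\Pi_0^\sigma j=\emptyset$), extended to $\Sigma$ coordinatewise. $p_n^\sigma(i)=\sum_{j:\Pi_n^\sigma j=i}p(j)$, $p_0^\sigma(\emptyset)=1$, $P^\sigma_{n-1}(i)=p_n^\sigma(i)/p^\sigma_{n-1}(\Pi^\sigma_{n-1}i)$ for $i\in\mathcal I_n^\sigma$. $\overline S(\mathbf p,\sigma)=\sum_{n=1}^d\max_{i\in\mathcal I_n^\sigma}\frac{\log P^\sigma_{n-1}(i)}{\log\lambda_i^{(\sigma_n)}}$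 and $\underline S(\mathbf p,\sigma)$ is the same with $\min$. $B_{\mathbf i}(r)=\{\mathbf j\in\Sigma:|\Pi_n^\sigma\mathbf j\wedge\Pi_n^\sigma\mathbf i|\ge L_{\mathbf i}(r,\sigma_n)\ \forall n\}$, where $\sigma$ is the ordering of the cube determined by $\mathbf i$ at scale $r$ and $\wedge$ denotes the longest common prefix. *)

From HB Require Import structures.
From mathcomp Require Import all_boot all_order all_algebra perm.
From mathcomp Require Import all_classical all_reals all_analysis.
Set Implicit Arguments. Unset Strict Implicit. Unset Printing Implicit Defensive.
Import Order.TTheory GRing.Theory Num.Theory.
Local Open Scope ring_scope.

Section Sponge.
Variables (R : realType) (N d : nat).
(* maps f_i(x) = A_i x + t_i, A_i = diag(lam i 0, ..., lam i (d-1)) ;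
   indices 0-based: symbols 1..N are 'I_N, coordinates 1..d are 'I_d. *)
Variables (lam t : 'I_N -> 'I_d -> R).

Definition fmap (i : 'I_N) (x : 'I_d -> R) : 'I_d -> R :=
  fun n => lam i n * x n + t i n.

Definition in_cube (x : 'I_d -> R) : Prop := forall n, 0 <= x n <= 1.

Definition sponge_hyp : Prop :=
  [/\ (forall i n, 0 < lam i n < 1),
      (forall i x, in_cube x -> in_cube (fmap i x)),
      (forall i j, i != j -> exists2 x, in_cube x & fmap i x <> fmap j x)
    & (forall m n : 'I_d, m != n -> exists i, lam i n != lam i m)].

Definition lam_min : R := \big[Num.min/1]_(i : 'I_N) \big[Num.min/1]_(n : 'I_d) lam i n.

(* symbolic space Sigma = I^N (sequences indexed from 0) *)
Definition seqI := nat -> 'I_N.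

Definition cprod (ii : seqI) (L : nat) (n : 'I_d) : R := \prod_(l < L) lam (ii l) n.

(* L_i(r,n): the integer L with prod_{l<=L} lam <= r < prod_{l<=L-1} lam
   (1-based in the paper; here l ranges over 0..L-1).  For r >= 1 the
   convention L = 0 is used (empty product = 1 <= r). *)
Definition isL (ii : seqI) (r : R) (n : 'I_d) (L : nat) : Prop :=
  cprod ii L n <= r /\ ((0 < L)%N -> r < cprod ii L.-1 n).

(* the unique such integer (exists and is unique for r > 0) *)
Definition Lf (ii : seqI) (r : R) (n : 'I_d) : nat := xget 0%N [set L | isL ii r n L].

(* sigma_n (1-based) is sigma (n-1) here. *)
Definition sigma_ordered (s : {perm 'I_d}) (ii : seqI) (r : R) : Prop :=
  forall a b : 'I_d, (a < b)%N ->
    ((Lf ii r (s b) <= Lf ii r (s a))%N /\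
    (Lf ii r (s a) = Lf ii r (s b) :> nat ->
       if (s a < s b)%N
       then cprod ii (Lf ii r (s a)) (s b) <= cprod ii (Lf ii r (s a)) (s a)
       else cprod ii (Lf ii r (s b)) (s b) < cprod ii (Lf ii r (s b)) (s a))).

Definition realised (s : {perm 'I_d}) : Prop :=
  exists (ii : seqI) (r : R), 0 < r /\ sigma_ordered s ii r.

Definition overlap (s : {perm 'I_d}) (n : nat) (i j : 'I_N) : Prop :=
  forall x, in_cube x -> forall a : 'I_d, (a < n)%N -> fmap i x (s a) = fmap j x (s a).

Definition Iset (s : {perm 'I_d}) (n : nat) (j : 'I_N) : bool :=
  if n == d then true
  else [forall i : 'I_N, (i < j)%N ==> ~~ `[< overlap s n i j >] ].

Definition Pi (s : {perm 'I_d}) (n : nat) (j : 'I_N) : 'I_N :=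
  if n == d then j
  else odflt j [pick i | Iset s n i && `[< overlap s n i j >] ].

Variable p : 'I_N -> R.

Definition pn (s : {perm 'I_d}) (n : nat) (i : 'I_N) : R :=
  if n == 0%N then 1 else \sum_(j | Pi s n j == i) p j.

(* P_{n-1}^sigma(i) = p_n(i) / p_{n-1}(Pi_{n-1} i), for n >= 1 *)
Definition Pcond (s : {perm 'I_d}) (n : nat) (i : 'I_N) : R :=
  pn s n i / pn s n.-1 (Pi s n.-1 i).

(* the n-th summand (n = k+1), evaluated at i *)
Definition Sterm (s : {perm 'I_d}) (k : 'I_d) (i : 'I_N) : R :=
  ln (Pcond s k.+1 i) / ln (lam i (s k)).

Definition seq_max (xs : seq R) : R := \big[Num.max/head 0 xs]_(x <- xs) x.
Definition seq_min (xs : seq R) : R := \big[Num.min/head 0 xs]_(x <- xs) x.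

Definition Supper (s : {perm 'I_d}) : R :=
  \sum_(k < d) seq_max [seq Sterm s k i | i <- enum (Iset s k.+1)].
Definition Slower (s : {perm 'I_d}) : R :=
  \sum_(k < d) seq_min [seq Sterm s k i | i <- enum (Iset s k.+1)].

(* B_i(r) depends only on the first M = max_n L_i(r,n) coordinates; its
   Bernoulli measure mu_p is the mass of the corresponding cylinder words. *)
Definition Mdepth (ii : seqI) (r : R) : nat := \max_(n : 'I_d) Lf ii r n.

Definition inB (s : {perm 'I_d}) (ii : seqI) (r : R) (M : nat) (w : {ffun 'I_M -> 'I_N}) : bool :=
  [forall k : 'I_d, forall l : 'I_M,
     (l < Lf ii r (s k))%N ==> (Pi s k.+1 (w l) == Pi s k.+1 (ii l))].

Definition muB (s : {perm 'I_d}) (ii : seqI) (r : R) : R :=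
  \sum_(w : {ffun 'I_(Mdepth ii r) -> 'I_N} | inB s ii r w) \prod_(l < Mdepth ii r) p (w l).

End Sponge.

From Pilot Require Import Defs.
From HB Require Import structures.
From mathcomp Require Import all_boot all_order all_algebra perm.
From mathcomp Require Import all_classical all_reals all_analysis.
From mathcomp Require Import lra.
Set Implicit Arguments. Unset Strict Implicit. Unset Printing Implicit Defensive.
Import Order.TTheory GRing.Theory Num.Theory.
Local Open Scope ring_scope.

(* At a scale r at which ii determines a sigma-ordered cube, the lengths
   L(r, sigma_1) >= ... >= L(r, sigma_d) decrease, so at depth l the cube
   B_ii(r) constrains the symbol only through Pi_1, ..., Pi_m for an initial
   segment m.  These projections refine one another, so the mass of such a
   layer telescopes into the product of the conditional probabilities
   P_(n-1)(Pi_n ii_l), n <= m, and mu_p(B_ii(r)) is the product over all layers.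
   In mu_p(B_ii(R)) / mu_p(B_ii(r)) the layers l < L(R, sigma_n) cancel; each
   remaining factor is 1 / lambda^S with S = log P / log lambda squeezed between
   the min and the max defining S_lower and S_upper, and the inverses of the
   leftover contraction ratios multiply to a number between lambda_min R / r
   and R / (lambda_min r), because prod_(l < L(rho, n)) lambda_(ii_l)^(n) lies
   in [lambda_min rho, rho]. *)

Lemma antitone_prefix d (P : pred 'I_d) :
  (forall a b : 'I_d, (a < b)%N -> P b -> P a) ->
  exists2 m, (m <= d)%N & forall k : 'I_d, P k = (k < m)%N.
Proof.
move=> P_anti; exists (\max_(k | P k) k.+1).
  by apply/bigmax_leqP => k _; apply: ltn_ord.
move=> k; apply/idP/idP => [Pk | ]; first exact: (leq_bigmax_cond _ Pk).
apply: contraLR => nPk; rewrite -leqNgt; apply/bigmax_leqP => k' Pk'.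
rewrite ltnNge; apply: contra nPk; rewrite leq_eqVlt => /orP[/eqP/val_inj -> //|].
by move/P_anti; apply.
Qed.

Lemma seq_max_ge0 (R : realType) (xs : seq R) :
  (forall x, x \in xs -> 0 <= x) -> 0 <= seq_max xs.
Proof.
case: xs => [|x xs] xs_ge0; first by rewrite /seq_max big_nil.
by apply: le_trans (bigmax_ge_id _ _ _ _); apply: xs_ge0; rewrite mem_head.
Qed.

Lemma seq_min_ge0 (R : realType) (xs : seq R) :
  (forall x, x \in xs -> 0 <= x) -> 0 <= seq_min xs.
Proof.
case: xs => [|x xs] xs_ge0; first by rewrite /seq_min big_nil.
rewrite /seq_min big_seq; apply: le_bigmin => [|y /xs_ge0 //].
by apply: xs_ge0; rewrite mem_head.
Qed.

Section Projections.
Variables (R : realType) (N d : nat) (lam t : 'I_N -> 'I_d -> R) (s : {perm 'I_d}).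

Local Notation overlap := (Defs.overlap lam t s).
Local Notation Iset := (Defs.Iset lam t s).
Local Notation Pi := (Defs.Pi lam t s).

Lemma overlap_refl n i : overlap n i i.
Proof. by []. Qed.

Lemma overlap_sym n i j : overlap n i j -> overlap n j i.
Proof. by move=> ov x cx a an; rewrite ov. Qed.

Lemma overlap_trans n i j k : overlap n i j -> overlap n j k -> overlap n i k.
Proof. by move=> ov1 ov2 x cx a an; rewrite ov1 ?ov2. Qed.

Lemma overlap_le n m i j : (n <= m)%N -> overlap m i j -> overlap n i j.
Proof. by move=> nm ov x cx a an; rewrite ov // (leq_trans an). Qed.

Lemma Pi_repr n j : n != d -> Iset n (Pi n j) /\ overlap n (Pi n j) j.
Proof.
move=> nd; rewrite /Defs.Pi (negbTE nd).
case: pickP => [i /andP[Ii /asboolP] // | no_rep]; exfalso.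
have [i0 /asboolP ov0 i0_min] := @arg_minnP _ j (fun i => `[< overlap n i j >])
  (fun i : 'I_N => nat_of_ord i) (asboolT (@overlap_refl n j)).
move: (no_rep i0); rewrite asboolT // andbT /Defs.Iset (negbTE nd) => /negP; apply.
apply/forallP => i; apply/implyP => lt_i_i0; apply/negP => /asboolP ov.
by move: (i0_min i (asboolT (overlap_trans ov ov0))); rewrite leqNgt lt_i_i0.
Qed.

Lemma Iset_overlap_eq n i j : n != d -> Iset n i -> Iset n j -> overlap n i j -> i = j.
Proof.
move=> nd; rewrite /Defs.Iset (negbTE nd) => /forallP Ii /forallP Ij ov.
case: (ltngtP i j) => [lt_ij|lt_ji|/val_inj //].
- by move: (Ij i); rewrite lt_ij asboolT.
- by move: (Ii j); rewrite lt_ji (asboolT (overlap_sym ov)).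
Qed.

Lemma Iset_Pi n j : Iset n (Pi n j).
Proof.
by case: (eqVneq n d) => [->|nd]; [rewrite /Defs.Iset eqxx | case: (Pi_repr j nd)].
Qed.

Lemma Pi_id n i : Iset n i -> Pi n i = i.
Proof.
case: (eqVneq n d) => [->|nd Ii]; first by rewrite /Defs.Pi eqxx.
by have [IPi ov] := Pi_repr i nd; apply: Iset_overlap_eq nd IPi Ii ov.
Qed.

Lemma Pi_le_eq n m j j' :
  (n <= m)%N -> (m <= d)%N -> Pi m j = Pi m j' -> Pi n j = Pi n j'.
Proof.
move=> nm md; case: (eqVneq m d) => [-> | m_ne_d].
  by rewrite /Defs.Pi eqxx => ->.
have nd : n != d by rewrite neq_ltn (leq_ltn_trans nm) // ltn_neqAle m_ne_d.
have [_ ovm] := Pi_repr j m_ne_d; have [_ ovm'] := Pi_repr j' m_ne_d.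
move=> Pm_eq; rewrite Pm_eq in ovm.
have ov_jj' : overlap n j j'.
  by apply: overlap_le nm _; apply: overlap_trans (overlap_sym ovm) ovm'.
have [In ovn] := Pi_repr j nd; have [In' ovn'] := Pi_repr j' nd.
apply: Iset_overlap_eq nd In In' _.
exact: overlap_trans ovn (overlap_trans ov_jj' (overlap_sym ovn')).
Qed.

Lemma Pi_Pi n m j : (n <= m)%N -> (m <= d)%N -> Pi n (Pi m j) = Pi n j.
Proof. by move=> nm md; apply: Pi_le_eq nm md _; rewrite Pi_id ?Iset_Pi. Qed.

Lemma lam_Pi m j (k : 'I_d) : (k < m)%N -> lam (Pi m j) (s k) = lam j (s k).
Proof.
move=> km; case: (eqVneq m d) => [->|md]; first by rewrite /Defs.Pi eqxx.
have [_ ov] := Pi_repr j md.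
have c0 : in_cube (fun _ : 'I_d => 0 : R) by move=> n; rewrite lexx ler01.
have c1 : in_cube (fun _ : 'I_d => 1 : R) by move=> n; rewrite lexx ler01.
move: (ov _ c0 k km) (ov _ c1 k km); rewrite /Defs.fmap !mulr0 !mulr1 !add0r => ->.
exact: addIr.
Qed.

Variable p : 'I_N -> R.
Hypothesis p_gt0 : forall i, 0 < p i.
Hypothesis p_sum1 : \sum_i p i = 1.

Local Notation pn := (Defs.pn lam t p s).
Local Notation Pcond := (Defs.Pcond lam t p s).

Definition agree_upto (m : nat) (y : 'I_N) : pred 'I_N :=
  [pred x | [forall k : 'I_d, (k < m)%N ==> (Pi k.+1 x == Pi k.+1 y)]].

Lemma pn_Pi_gt0 m y : 0 < pn m (Pi m y).
Proof.
rewrite /Defs.pn; case: ifP => // _; rewrite (bigD1 y) //=.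
by rewrite ltr_pwDl // sumr_ge0 // => i _; apply: ltW.
Qed.

Lemma sum_agree_upto m y : (m <= d)%N ->
  \sum_(x | agree_upto m y x) p x = pn m (Pi m y).
Proof.
move=> md; rewrite /Defs.pn; case: eqP => [-> | /eqP m_gt0].
  by rewrite -p_sum1; apply: eq_bigl => x; apply/forallP.
apply: eq_bigl => x /=; apply/forallP/eqP => [agree | Pm_eq k].
  case: m md m_gt0 agree => // m md _ /(_ (Ordinal md)).
  by rewrite ltnSn => /eqP.
by apply/implyP => km; apply/eqP; apply: Pi_le_eq km md Pm_eq.
Qed.

Lemma pn_Pi_telescope m y : (m <= d)%N ->
  pn m (Pi m y) = \prod_(k < m) Pcond k.+1 (Pi k.+1 y).
Proof.
elim: m => [|m IHm] md; first by rewrite big_ord0.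
rewrite big_ord_recr /= -IHm; last exact: ltnW.
rewrite /Defs.Pcond.
have -> : pn m (Pi m (Pi m.+1 y)) = pn m (Pi m y).
  by case: m {IHm} md => [|m md]; [rewrite /Defs.pn | rewrite Pi_Pi].
by rewrite mulrC divfK // gt_eqF // pn_Pi_gt0.
Qed.

Lemma Pcond_Pi_gt0 k y : 0 < Pcond k.+1 (Pi k.+1 y).
Proof. by rewrite /Defs.Pcond divr_gt0 // pn_Pi_gt0. Qed.

Lemma Pcond_le1 k i : (k < d)%N -> Iset k.+1 i -> Pcond k.+1 i <= 1.
Proof.
move=> kd Ii; rewrite /Defs.Pcond -{1}(Pi_id Ii) ler_pdivrMr ?pn_Pi_gt0 // mul1r.
rewrite -!sum_agree_upto ?(ltnW kd) //.
rewrite [leLHS]big_mkcond [leRHS]big_mkcond /=; apply: ler_sum => x _.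
case: ifPn => [/forallP agree | _]; last by case: ifP => // _; apply: ltW.
rewrite ifT //; apply/forallP => k'; apply/implyP => k'k.
by move/implyP: (agree k'); apply; apply: ltnW.
Qed.

End Projections.

Section Scales.
Variables (R : realType) (N d : nat) (lam : 'I_N -> 'I_d -> R).
Hypothesis lam_in01 : forall i n, 0 < lam i n < 1.

Local Notation cprod := (cprod lam).
Local Notation Lf := (Lf lam).

Lemma lam_gt0 i n : 0 < lam i n.
Proof. by case/andP: (lam_in01 i n). Qed.

Lemma ln_lam_lt0 i n : ln (lam i n) < 0.
Proof. exact: ln_lt0 (lam_in01 i n). Qed.

Lemma lam_min_le i n : lam_min lam <= lam i n.
Proof.
rewrite /lam_min; move: (bigmin_le 1 i (fun j => \big[Num.min/1]_n lam j n)).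
by move/le_trans; apply; apply: bigmin_le.
Qed.

Lemma lam_min_gt0 : 0 < lam_min lam.
Proof.
apply: (big_ind (fun x => 0 < x)) => // [x y x0 y0 | i _]; first by rewrite lt_min x0.
apply: (big_ind (fun x => 0 < x)) => // [x y x0 y0 | n _]; first by rewrite lt_min x0.
exact: lam_gt0.
Qed.

Lemma lam_min_le1 : lam_min lam <= 1.
Proof. by rewrite /lam_min bigmin_le_id. Qed.

Lemma cprod_gt0 ii L n : 0 < cprod ii L n.
Proof. by apply: prodr_gt0 => l _; apply: lam_gt0. Qed.

Lemma cprodS ii L n : cprod ii L.+1 n = cprod ii L n * lam (ii L) n.
Proof. by rewrite /Defs.cprod big_ord_recr. Qed.

Lemma cprod_le ii n a b : (a <= b)%N -> cprod ii b n <= cprod ii a n.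
Proof.
move/subnK <-; elim: (b - a)%N => [|k IHk] //=.
rewrite addSn cprodS; apply: le_trans IHk.
by rewrite ger_pMr ?cprod_gt0 // ltW //; case/andP: (lam_in01 (ii (k + a)%N) n).
Qed.

Lemma ln_cprod ii L n : ln (cprod ii L n) = \sum_(0 <= l < L) ln (lam (ii l) n).
Proof.
have -> : cprod ii L n = expR (\sum_(0 <= l < L) ln (lam (ii l) n)).
  rewrite /Defs.cprod big_mkord expR_sum; apply: eq_bigr => l _.
  by rewrite lnK // posrE lam_gt0.
exact: expRK.
Qed.

Lemma isL_exists ii r n : 0 < r -> exists L, isL lam ii r n L.
Proof.
move=> r_gt0; pose mu := \big[Num.max/0]_i lam i n.
have mu_gt0 : 0 < mu by apply: lt_le_trans (le_bigmax _ _ (ii 0%N)); apply: lam_gt0.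
have mu_lt1 : `|mu| < 1.
  rewrite gtr0_norm //; apply: (big_ind (fun x => x < 1)) => // [x y x1 y1 | i _].
    by rewrite gt_max x1.
  by case/andP: (lam_in01 i n).
have cprod_le_mu L : cprod ii L n <= mu ^+ L.
  rewrite /Defs.cprod -[L in mu ^+ L]card_ord -prodr_const.
  by apply: ler_prod => l _; rewrite ltW ?lam_gt0 ?le_bigmax.
have [L0 _ muL_lt] := cvgr_lt _ (cvg_expr mu_lt1) _ r_gt0.
have small : exists L, cprod ii L n <= r.
  by exists L0; apply: le_trans (cprod_le_mu L0) (ltW (muL_lt L0 (leqnn L0))).
have [L L_small L_min] := ex_minnP small.
exists L; split => // L_gt0; rewrite ltNge; apply/negP => /L_min.
by rewrite -{1}(prednK L_gt0) ltnn.
Qed.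

Lemma isL_Lf ii r n : 0 < r -> isL lam ii r n (Lf ii r n).
Proof. by move=> r_gt0; apply: xgetPex; apply: isL_exists. Qed.

Lemma cprod_Lf_bounds ii r n : 0 < r -> r <= 1 ->
  r * lam_min lam <= cprod ii (Lf ii r n) n <= r.
Proof.
move=> r_gt0 r_le1; have [-> L_min] := isL_Lf ii n r_gt0; rewrite andbT.
case: (Lf ii r n) L_min => [_ | L /(_ isT) /= r_lt].
  rewrite /Defs.cprod big_ord0 mulr_ile1 ?lam_min_le1 //; first exact: ltW.
  exact: ltW lam_min_gt0.
rewrite cprodS ler_pM ?lam_min_le ?(ltW r_lt) //; first exact: ltW.
exact: ltW lam_min_gt0.
Qed.

Lemma Lf_le ii n r r' : 0 < r -> r < r' -> (Lf ii r' n <= Lf ii r n)%N.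
Proof.
move=> r_gt0 r_lt_r'; have r'_gt0 := lt_trans r_gt0 r_lt_r'.
have [_ r'_lt] := isL_Lf ii n r'_gt0; have [r_ge _] := isL_Lf ii n r_gt0.
rewrite leqNgt; apply/negP => lt_L; have L_gt0 := leq_ltn_trans (leq0n _) lt_L.
have : cprod ii (Lf ii r' n).-1 n <= cprod ii (Lf ii r n) n.
  by apply: cprod_le; rewrite -ltnS prednK.
by move/le_trans/(_ (le_trans r_ge (ltW r_lt_r'))); rewrite leNgt r'_lt.
Qed.

Lemma sum_neg_ln_lam ii n a b : (a <= b)%N ->
  \sum_(a <= l < b) - ln (lam (ii l) n) = ln (cprod ii a n) - ln (cprod ii b n).
Proof.
move=> ab; rewrite !ln_cprod (big_cat_nat (leq0n a) ab) /= sumrN.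
by rewrite opprD addrA subrr add0r.
Qed.

Lemma ln_cprod_Lf_bounds ii r n : 0 < r -> r <= 1 ->
  ln r + ln (lam_min lam) <= ln (cprod ii (Lf ii r n) n) <= ln r.
Proof.
move=> r_gt0 r_le1; have /andP[lo hi] := cprod_Lf_bounds ii n r_gt0 r_le1.
rewrite -lnM ?posrE ?lam_min_gt0 //.
by rewrite !ler_ln ?posrE ?mulr_gt0 ?cprod_gt0 ?lam_min_gt0 // lo hi.
Qed.

End Scales.

Section MeasureRatio.
Variables (R : realType) (N d : nat) (lam t : 'I_N -> 'I_d -> R) (s : {perm 'I_d}).
Variable p : 'I_N -> R.
Hypothesis lam_in01 : forall i n, 0 < lam i n < 1.
Hypothesis p_gt0 : forall i, 0 < p i.
Hypothesis p_sum1 : \sum_i p i = 1.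
Variable ii : seqI N.

Local Notation Iset := (Defs.Iset lam t s).
Local Notation Pi := (Defs.Pi lam t s).
Local Notation Pcond := (Defs.Pcond lam t p s).
Local Notation Sterm := (Defs.Sterm lam t p s).
Local Notation muB := (Defs.muB lam t p s ii).
Local Notation Lf := (Defs.Lf lam ii).
Local Notation Svalues k := [seq Sterm k i | i <- enum (Iset k.+1)].

(* P_k(Pi_(k+1) ii_l) of the paper, coordinates being numbered from 0. *)
Definition cond_mass (k l : nat) : R := Pcond k.+1 (Pi k.+1 (ii l)).

Lemma cond_mass_gt0 k l : 0 < cond_mass k l.
Proof. exact: Pcond_Pi_gt0. Qed.

Lemma sum_p_layer (L : 'I_d -> nat) l y :
  (forall a b : 'I_d, (a < b)%N -> (L b <= L a)%N) ->
  \sum_(x | [forall k : 'I_d, (l < L k)%N ==> (Pi k.+1 x == Pi k.+1 y)]) p x =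
  \prod_(k : 'I_d | (l < L k)%N) Pcond k.+1 (Pi k.+1 y).
Proof.
move=> L_anti.
have [m md layerE] := @antitone_prefix d (fun k => l < L k)%N
  (fun a b ab lb => leq_trans lb (L_anti a b ab)).
rewrite (eq_bigl (agree_upto lam t s m y)); last first.
  by move=> x; apply: eq_forallb => k; rewrite layerE.
rewrite sum_agree_upto // pn_Pi_telescope //.
rewrite (big_ord_widen _ (fun k => Pcond k.+1 (Pi k.+1 y)) md).
by apply: eq_bigl => k; rewrite layerE.
Qed.

Lemma muB_prod r : sigma_ordered lam s ii r ->
  muB r = \prod_(k : 'I_d) \prod_(0 <= l < Lf r (s k)) cond_mass k l.
Proof.
move=> ordered; pose L k := Lf r (s k); set M := Mdepth lam ii r.
have L_anti (a b : 'I_d) : (a < b)%N -> (L b <= L a)%N.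
  by move=> ab; case: (ordered a b ab).
have L_le k : (L k <= M)%N by rewrite /L /M /Mdepth; apply: leq_bigmax.
pose B (l : 'I_M) : pred 'I_N :=
  fun x => [forall k : 'I_d, (l < L k)%N ==> (Pi k.+1 x == Pi k.+1 (ii l))].
have -> : muB r = \prod_(l < M) \sum_(x | B l x) p x.
  rewrite bigA_distr_big_dep; apply: eq_bigl => w.
  apply/forallP/familyP => [inB l | inB k]; apply/forallP.
    by move=> k; apply: (forallP (inB k)).
  by move=> l; apply: (forallP (inB l)).
under eq_bigr => l _ do rewrite sum_p_layer // big_mkcond.
rewrite exchange_big; apply: eq_bigr => k _ /=.
by rewrite -big_mkcond -(big_ord_widen _ (cond_mass k) (L_le k)) big_mkord.
Qed.

Lemma muB_expR r : sigma_ordered lam s ii r ->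
  muB r = expR (\sum_(k : 'I_d) \sum_(0 <= l < Lf r (s k)) ln (cond_mass k l)).
Proof.
move/muB_prod ->; rewrite expR_sum; apply: eq_bigr => k _.
by rewrite expR_sum; apply: eq_bigr => l _; rewrite lnK // posrE cond_mass_gt0.
Qed.

Lemma muB_ratio Rb r : 0 < r -> r < Rb ->
  sigma_ordered lam s ii Rb -> sigma_ordered lam s ii r ->
  muB Rb / muB r =
  expR (\sum_(k : 'I_d) \sum_(Lf Rb (s k) <= l < Lf r (s k)) - ln (cond_mass k l)).
Proof.
move=> r_gt0 r_lt_Rb ordered_Rb ordered_r.
rewrite (muB_expR ordered_Rb) (muB_expR ordered_r) -expRN -expRD -sumrB.
congr expR; apply: eq_bigr => k _.
rewrite (big_cat_nat (leq0n _) (Lf_le lam_in01 ii (s k) r_gt0 r_lt_Rb)) /= sumrN.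
by rewrite opprD addrA subrr add0r.
Qed.

Lemma ln_cond_mass (k : 'I_d) l :
  ln (cond_mass k l) = Sterm k (Pi k.+1 (ii l)) * ln (lam (ii l) (s k)).
Proof. by rewrite /Defs.Sterm lam_Pi // divfK // ltr0_neq0 ?(ln_lam_lt0 lam_in01). Qed.

Lemma Sterm_ge0 (k : 'I_d) i : Iset k.+1 i -> 0 <= Sterm k i.
Proof.
move=> Ii; rewrite /Defs.Sterm mulr_le0 ?ln_le0 ?invr_le0 //.
  exact: (Pcond_le1 p_gt0 p_sum1 (ltn_ord k) Ii).
exact: ltW (ln_lam_lt0 lam_in01 _ _).
Qed.

Lemma Svalues_ge0 (k : 'I_d) x : x \in Svalues k -> 0 <= x.
Proof. by case/mapP => i; rewrite mem_enum => Ii ->; apply: Sterm_ge0. Qed.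

Lemma Sterm_Pi_bounds (k : 'I_d) y :
  seq_min (Svalues k) <= Sterm k (Pi k.+1 y) <= seq_max (Svalues k).
Proof.
have mem : Sterm k (Pi k.+1 y) \in Svalues k.
  by apply: map_f; rewrite mem_enum; apply: Iset_Pi.
by rewrite /seq_min /seq_max (ge_bigmin_seq _ _ _ _ mem) ?(le_bigmax_seq _ _ _ _ mem).
Qed.

Lemma layer_sum_bounds (k : 'I_d) Rb r : 0 < r -> r < Rb -> Rb <= 1 ->
  seq_min (Svalues k) * (ln Rb - ln r + ln (lam_min lam))
    <= \sum_(Lf Rb (s k) <= l < Lf r (s k)) - ln (cond_mass k l)
    <= seq_max (Svalues k) * (ln Rb - ln r - ln (lam_min lam)).
Proof.
move=> r_gt0 r_lt_Rb Rb_le1.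
have LRr := Lf_le lam_in01 ii (s k) r_gt0 r_lt_Rb.
pose w l := - ln (lam (ii l) (s k)).
have w_ge0 l : 0 <= w l by rewrite oppr_ge0 ltW ?(ln_lam_lt0 lam_in01).
have /andP[wlo whi] : ln Rb - ln r + ln (lam_min lam)
    <= \sum_(Lf Rb (s k) <= l < Lf r (s k)) w l
    <= ln Rb - ln r - ln (lam_min lam).
  have := ln_cprod_Lf_bounds lam_in01 ii (s k) (lt_trans r_gt0 r_lt_Rb) Rb_le1.
  have := ln_cprod_Lf_bounds lam_in01 ii (s k) r_gt0 (ltW (lt_le_trans r_lt_Rb Rb_le1)).
  by rewrite /w sum_neg_ln_lam // => /andP[? ?] /andP[? ?]; apply/andP; split; lra.
under eq_bigr do rewrite ln_cond_mass -mulrN.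
apply/andP; split.
  apply: le_trans (ler_wpM2l (seq_min_ge0 (@Svalues_ge0 k)) wlo) _.
  rewrite mulr_sumr /w; apply: ler_sum_nat => l _.
  by have /andP[lo _] := Sterm_Pi_bounds k (ii l); apply: ler_wpM2r lo; apply: w_ge0.
apply: le_trans (ler_wpM2l (seq_max_ge0 (@Svalues_ge0 k)) whi).
rewrite mulr_sumr /w; apply: ler_sum_nat => l _.
by have /andP[_ hi] := Sterm_Pi_bounds k (ii l); apply: ler_wpM2r hi; apply: w_ge0.
Qed.

Lemma Supper_ge0 : 0 <= Supper lam t p s.
Proof. by apply: sumr_ge0 => k _; apply/seq_max_ge0/Svalues_ge0. Qed.

Lemma Slower_ge0 : 0 <= Slower lam t p s.
Proof. by apply: sumr_ge0 => k _; apply/seq_min_ge0/Svalues_ge0. Qed.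

Lemma ln_muB_ratio_bounds Rb r : 0 < r -> r < Rb -> Rb <= 1 ->
  Slower lam t p s * (ln Rb - ln r + ln (lam_min lam))
    <= \sum_(k : 'I_d) \sum_(Lf Rb (s k) <= l < Lf r (s k)) - ln (cond_mass k l)
    <= Supper lam t p s * (ln Rb - ln r - ln (lam_min lam)).
Proof.
move=> r_gt0 r_lt_Rb Rb_le1; rewrite !mulr_suml; apply/andP; split.
  by apply: ler_sum => k _; case/andP: (layer_sum_bounds k r_gt0 r_lt_Rb Rb_le1).
by apply: ler_sum => k _; case/andP: (layer_sum_bounds k r_gt0 r_lt_Rb Rb_le1).
Qed.

End MeasureRatio.

Theorem lemma5p3 (R : realType) (N d : nat) (lam t : 'I_N -> 'I_d -> R)
    (Hsponge : sponge_hyp lam t)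
    (s : {perm 'I_d}) (Hs : realised lam s)
    (p : 'I_N -> R) (Hp_pos : forall i, 0 < p i) (Hp_sum : \sum_i p i = 1) :
  exists C : R, 1 < C /\
    forall (ii : seqI N) (Rb r : R),
      0 < Rb -> Rb <= 1 -> 0 < r -> r < lam_min lam * Rb ->
      sigma_ordered lam s ii Rb -> sigma_ordered lam s ii r ->
      C^-1 * powR (Rb / r) (Slower lam t p s)
        <= muB lam t p s ii Rb / muB lam t p s ii r
      /\ muB lam t p s ii Rb / muB lam t p s ii r
        <= C * powR (Rb / r) (Supper lam t p s).
Proof.
case: Hsponge => lam_in01 _ _ _.
have Su_ge0 := Supper_ge0 t s lam_in01 Hp_pos Hp_sum.
have Sl_ge0 := Slower_ge0 t s lam_in01 Hp_pos Hp_sum.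
have ln_lam_min_le0 : ln (lam_min lam) <= 0 by apply/ln_le0/lam_min_le1.
have Suc_le0 := mulr_ge0_le0 Su_ge0 ln_lam_min_le0.
have Slc_le0 := mulr_ge0_le0 Sl_ge0 ln_lam_min_le0.
exists (expR (1 - (Supper lam t p s + Slower lam t p s) * ln (lam_min lam))).
split; first by rewrite expR_gt1 mulrDl; lra.
move=> ii Rb r Rb_gt0 Rb_le1 r_gt0 r_lt ordered_Rb ordered_r.
have r_lt_Rb : r < Rb by apply: lt_le_trans r_lt _; rewrite ger_pMl // lam_min_le1.
have powRE a : powR (Rb / r) a = expR (a * (ln Rb - ln r)).
  by rewrite /powR gt_eqF ?divr_gt0 // ln_div // posrE.
have /andP[lo hi] :=
  ln_muB_ratio_bounds t s lam_in01 Hp_pos Hp_sum ii r_gt0 r_lt_Rb Rb_le1.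
rewrite muB_ratio // !powRE -expRN -!expRD !ler_expR.
by split; [move: lo | move: hi]; rewrite !(mulrDr, mulrDl, mulrN); lra.
Qed.
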